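(* Let $n$ be even, $\epsilon>0$, and let $\ket{\psi}=\ket{\phi_1}_C\otimes\ket{\phi_2}_{\overline{C}}$ be an $n$-qubit state which is product across an unknown cut $C\subseteq[n]$ with $|C|=n/2$, where the factor states $\ket{\phi_1},\ket{\phi_2}$ are each $\epsilon$-far from all separable $(n/2)$-qubit states. Then there is a quantum algorithm (non-adaptive Fourier sampling followed by classical linear algebra) which finds the hidden cut $C$ (i.e. the unordered bipartition $\{C,\overline{C}\}$) with high probability using $O(n^2/\epsilon^2)$ copies of $\ket{\psi}$. The algorithm requires coherent access to $O(n/\epsilon^2)$ copies at a time, on which it acts with circuits of depth $O(\log(n/\epsilon^2))$ given $O(n^2/\epsilon^2)$ ancillary qubits.
   Context: For a set $Q$ of qubits, a separable state on $Q$ is one of the form $\ket{a}_A\otimes\ket{b}_{Q\setminus A}$ with $A\subsetneq Q$ nonempty. A pure state $\ket{\phi}$ is $\epsilon$-far from a set $\mathcal{P}$ if $|\langle\phi|\chi\rangle|^2\le1-\epsilon^2$ for all $\ket{\chi}\in\mathcal{P}$. $\overline{C}=[n]\setminus C$. *)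

From HB Require Import structures.
From mathcomp Require Import all_boot all_order all_algebra.
From mathcomp Require Import all_classical all_reals all_analysis.
From mathcomp Require Import complex.
From Stdlib Require Lists.List.
Set Implicit Arguments. Unset Strict Implicit. Unset Printing Implicit Defensive.
Import Order.TTheory GRing.Theory Num.Theory.
Local Open Scope ring_scope.

(** Pure quantum states on a register of qubits indexed by a finite type [T]:
    amplitude functions on computational basis strings [{ffun T -> bool}]. *)
Definition bits (T : finType) := {ffun T -> bool}.
Definition qstate (R : realType) (T : finType) := bits T -> R[i].

Definition sqmod (R : realType) (z : R[i]) : R :=
  (complex.Re z) ^+ 2 + (complex.Im z) ^+ 2.

Definition normalized (R : realType) (T : finType) (v : qstate R T) : Prop :=
  \sum_(x : bits T) sqmod (v x) = 1.

Definition inner (R : realType) (T : finType) (u v : qstate R T) : R[i] :=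
  \sum_(x : bits T) conjc (u x) * v x.

Definition subreg (T : finType) (A : {set T}) := {i : T | i \in A}.
Definition restr (T : finType) (A : {set T}) (x : bits T) : bits (subreg A) :=
  [ffun i => x (val i)].

Definition separable (R : realType) (T : finType) (phi : qstate R T) : Prop :=
  exists A : {set T}, [/\ A != finset.set0, A != [set: T] &
    exists (a : qstate R (subreg A)) (b : qstate R (subreg (~: A))),
      [/\ normalized a, normalized b &
          forall x, phi x = a (restr A x) * b (restr (~: A) x)]].

Definition far_from_separable (R : realType) (T : finType) (eps : R)
    (phi : qstate R T) : Prop :=
  forall chi : qstate R T, separable chi ->
    sqmod (inner phi chi) <= 1 - eps ^+ 2.

Definition pair_index (b1 b2 : bool) : 'I_4 := inord (2 * b1 + b2)%N.

Record gate (R : realType) (T : finType) := Gate {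
  gq1 : T; gq2 : T; gU : 'M[R[i]]_4 }.

Definition unitary4 (R : realType) (U : 'M[R[i]]_4) : Prop :=
  U *m (map_mx conjc U)^T = 1%:M.

Definition gate_ok (R : realType) (T : finType) (g : gate R T) : Prop :=
  gq1 g != gq2 g /\ unitary4 (gU g).

Definition apply_gate (R : realType) (T : finType) (g : gate R T)
    (v : qstate R T) : qstate R T :=
  fun x => \sum_(y : bits T | [forall j, (j != gq1 g) && (j != gq2 g) ==> (y j == x j)])
     gU g (pair_index (x (gq1 g)) (x (gq2 g))) (pair_index (y (gq1 g)) (y (gq2 g))) * v y.

Definition gate_support (R : realType) (T : finType) (g : gate R T) : {set T} :=
  [set gq1 g; gq2 g].

Fixpoint layer_ok (R : realType) (T : finType) (l : seq (gate R T)) : Prop :=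
  match l with
  | [::] => True
  | g :: l' => [/\ gate_ok g,
      Stdlib.Lists.List.Forall (fun h => [disjoint gate_support g & gate_support h]) l' &
      layer_ok l']
  end.

Definition apply_layer (R : realType) (T : finType) (l : seq (gate R T))
    (v : qstate R T) : qstate R T :=
  foldl (fun w g => apply_gate g w) v l.

Definition circuit (R : realType) (T : finType) := seq (seq (gate R T)).
Definition circuit_ok (R : realType) (T : finType) (c : circuit R T) : Prop :=
  Stdlib.Lists.List.Forall (@layer_ok R T) c.
Definition depth (R : realType) (T : finType) (c : circuit R T) : nat := size c.
Definition apply_circuit (R : realType) (T : finType) (c : circuit R T)
    (v : qstate R T) : qstate R T :=
  foldl (fun w l => apply_layer l w) v c.

(** Register for one coherent round: k copies of the n-qubit input and a ancillas. *)
Definition register (n k a : nat) : finType := (('I_k * 'I_n) + 'I_a)%type.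

Definition input_state (R : realType) (n k a : nat) (psi : qstate R 'I_n)
    : qstate R (register n k a) :=
  fun x => (\prod_(j < k) psi [ffun i => x (inl (j, i))]) *
           (if [forall t : 'I_a, ~~ x (inr t)] then 1 else 0).

Definition outcome_prob (R : realType) (n k a : nat) (c : circuit R (register n k a))
    (psi : qstate R 'I_n) (x : bits (register n k a)) : R :=
  sqmod (apply_circuit c (@input_state R n k a psi) x).

(** Non-adaptive algorithm: r independent rounds, each running the same circuit
    on k fresh copies plus a ancillas and measuring everything; then an
    arbitrary classical post-processing [post] of the r outcomes outputs a set
    of qubits. *)
Definition success_prob (R : realType) (n k a r : nat) (c : circuit R (register n k a))
    (post : {ffun 'I_r -> bits (register n k a)} -> {set 'I_n})
    (psi : qstate R 'I_n) (C : {set 'I_n}) : R :=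
  \sum_(s : {ffun 'I_r -> bits (register n k a)} | (post s == C) || (post s == ~: C))
     \prod_(j < r) outcome_prob c psi (s j).

Definition hidden_cut_instance (R : realType) (n : nat) (eps : R)
    (psi : qstate R 'I_n) (C : {set 'I_n}) : Prop :=
  #|C| = n./2 /\
  exists (phi1 : qstate R (subreg C)) (phi2 : qstate R (subreg (~: C))),
    [/\ normalized phi1, normalized phi2,
        far_from_separable eps phi1, far_from_separable eps phi2 &
        forall x, psi x = phi1 (restr C x) * phi2 (restr (~: C) x)].

(* Measure the n qubit pairs of two copies of psi, pair by pair, in the Bell basis.
   For a set S of qubits, the parity of the number of singlet outcomes on S is even
   with probability (1 + tr rho_S^2) / 2: the Bell layer turns the swap of the S-parts
   of the two copies into that parity sign.  If psi = phi1_C (x) phi2_~C, swapping C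
   leaves psi (x) psi invariant, so the parity on C is always even.  Any other balanced
   S cuts phi1 along a nontrivial bipartition; since phi1 is eps-far from separable,
   its overlap with every product state is at most 1 - eps^2, so the reduced state of
   phi1 has operator norm, hence purity, at most 1 - eps^2, and the parity on S is even
   with probability at most 1 - eps^2 / 2.  After O(n / eps^2) rounds of two copies each,
   a union bound over the 2^n candidate sets shows that with probability at least 3/4
   only C and ~C are balanced sets consistent with every observed parity. *)

From HB Require Import structures.
From mathcomp Require Import all_boot all_order all_algebra.
From mathcomp Require Import all_classical all_reals all_analysis.
From mathcomp Require Import complex.
From mathcomp Require Import ring lra.
Import Order.TTheory GRing.Theory Num.Theory.
Local Open Scope ring_scope.
Set Implicit Arguments. Unset Strict Implicit. Unset Printing Implicit Defensive.

Section Splice.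
Variables (X : finType) (T : {set X}).

Definition join_bits (t : bits (subreg T)) (r : bits (subreg (~: T))) : bits X :=
  [ffun i => match insub i : option (subreg T) with
             | Some s => t s
             | None => if insub i : option (subreg (~: T)) is Some s then r s else false
             end].

Lemma restr_join_l t r : restr T (join_bits t r) = t.
Proof.
apply/ffunP => s; rewrite !ffunE.
by case: insubP => [s' _ /val_inj -> //|]; rewrite (valP s).
Qed.

Lemma restr_join_r t r : restr (~: T) (join_bits t r) = r.
Proof.
apply/ffunP => s; rewrite !ffunE.
case: insubP => [s' Ts' _|_]; first by have := valP s; rewrite inE Ts'.
by case: insubP => [s' _ /val_inj -> //|]; rewrite (valP s).
Qed.

Lemma join_restr x : join_bits (restr T x) (restr (~: T) x) = x.
Proof.
apply/ffunP => i; rewrite !ffunE.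
case: insubP => [s _ <-|Ti]; first by rewrite ffunE.
by case: insubP => [s _ <-|]; rewrite ?ffunE // inE Ti.
Qed.

Lemma sum_join_bits (V : nmodType) (F : bits X -> V) :
  \sum_x F x = \sum_t \sum_r F (join_bits t r).
Proof.
rewrite pair_big /= (reindex (fun p => join_bits p.1 p.2)) //=.
exists (fun x => (restr T x, restr (~: T) x)) => [[t r] _|x _] /=.
  by rewrite restr_join_l restr_join_r.
by rewrite join_restr.
Qed.

Definition splice (v u : bits X) : bits X := [ffun i => if i \in T then v i else u i].

Lemma splice_join t r t' r' : splice (join_bits t' r') (join_bits t r) = join_bits t' r.
Proof.
apply/ffunP => i; rewrite !ffunE.
by case: insubP => [s Ts <-|/negbTE ->]; rewrite ?(valP s).
Qed.

Lemma spliceK u v : splice (splice u v) (splice v u) = u.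
Proof. by apply/ffunP => i; rewrite !ffunE; case: (i \in T). Qed.

End Splice.

Lemma restr_splice (X : finType) (A T : {set X}) (v u : bits X) :
  restr A (splice T v u) = splice [set i : subreg A | val i \in T] (restr A v) (restr A u).
Proof. by apply/ffunP => i; rewrite !ffunE inE. Qed.

Section ComplexNorms.
Variable R : realType.
Local Notation C := R[i].

Lemma sqmodE (z : C) : (sqmod z)%:C%C = `|z| ^+ 2.
Proof. by rewrite /sqmod add_Re2_Im2. Qed.

Lemma sum_sqmodE (I : finType) (P : pred I) (F : I -> C) :
  (\sum_(i | P i) sqmod (F i))%:C%C = \sum_(i | P i) `|F i| ^+ 2.
Proof. by rewrite rmorph_sum; apply: eq_bigr => i _; exact: sqmodE. Qed.

Lemma normalizedE (I : finType) (v : qstate R I) :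
  normalized v -> \sum_x `|v x| ^+ 2 = 1.
Proof. by move=> nv; rewrite -sum_sqmodE nv. Qed.

Lemma sqmod_ge0 (z : C) : 0 <= sqmod z.
Proof. by rewrite /sqmod addr_ge0 // sqr_ge0. Qed.

Lemma sqmod0 : sqmod (0 : C) = 0.
Proof. by rewrite /sqmod /= expr0n addr0. Qed.

Lemma sqmod_eq0 (z : C) : (sqmod z == 0) = (z == 0).
Proof. by rewrite -(inj_eq (@complexI R)) sqmodE sqrf_eq0 normr_eq0. Qed.

Lemma sqmodZ (k : R) (z : C) : sqmod (k%:C%C * z) = k ^+ 2 * sqmod z.
Proof. by case: z => x y; rewrite /sqmod /=; ring. Qed.

Lemma conjc_sqr_norm (z : C) : conjc (`|z| ^+ 2) = `|z| ^+ 2.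
Proof. by rewrite sqr_normc rmorphM /= conjcK mulrC. Qed.

Lemma conjc_sum_sqr_norm (I : finType) (F : I -> C) :
  conjc (\sum_i `|F i| ^+ 2) = \sum_i `|F i| ^+ 2.
Proof. by rewrite rmorph_sum; apply: eq_bigr => i _; exact: conjc_sqr_norm. Qed.

Lemma sum_sqr_norm_ge0 (I : finType) (F : I -> C) : 0 <= \sum_i `|F i| ^+ 2.
Proof. by apply: sumr_ge0 => i _; rewrite exprn_ge0. Qed.

Lemma le_of_mulr_le (x y : C) : 0 <= x -> 0 <= y -> x * x <= y * x -> x <= y.
Proof.
move=> x0 y0 xxy; have [->//|xn0] := eqVneq x 0.
by rewrite -(ler_pM2r (_ : 0 < x)) // lt_def xn0 x0.
Qed.

Lemma sqr_norm_sub (x y : C) : `|x - y| ^+ 2 = `|x| ^+ 2 + `|y| ^+ 2 - (conjc x * y + conjc (conjc x * y)).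
Proof. by rewrite !sqr_normc rmorphB !rmorphM /= conjcK; ring. Qed.

End ComplexNorms.

Section PurityBound.
Variables (R : realType) (I J : finType).
Local Notation C := R[i].

Definition reduced_dm (A : I -> J -> C) t t' := \sum_r A t r * conjc (A t' r).

Definition purity (A : I -> J -> C) := \sum_t \sum_t' `|reduced_dm A t t'| ^+ 2.

Lemma conjc_reduced_dm A t t' : conjc (reduced_dm A t t') = reduced_dm A t' t.
Proof. by rewrite rmorph_sum; apply: eq_bigr => r _; rewrite rmorphM /= conjcK mulrC. Qed.

Lemma purity_ge0 A : 0 <= purity A.
Proof. by apply: sumr_ge0 => t _; exact: sum_sqr_norm_ge0. Qed.

Lemma conjc_purity A : conjc (purity A) = purity A.
Proof. by rewrite rmorph_sum; apply: eq_bigr => t _; exact: conjc_sum_sqr_norm. Qed.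

Variables (A : I -> J -> C) (c : C).
Hypothesis c_ge0 : 0 <= c.
Hypothesis overlap_le : forall (a : I -> C) (b : J -> C),
  `|\sum_t \sum_r conjc (A t r) * (a t * b r)| ^+ 2 <=
    c * (\sum_t `|a t| ^+ 2) * (\sum_r `|b r| ^+ 2).
Hypothesis A_normalized : \sum_t \sum_r `|A t r| ^+ 2 = 1.

Lemma adjoint_norm_le (a : I -> C) :
  \sum_r `|\sum_t conjc (A t r) * a t| ^+ 2 <= c * \sum_t `|a t| ^+ 2.
Proof.
set d := fun r => \sum_t conjc (A t r) * a t.
have := overlap_le a (fun r => conjc (d r)).
have -> : \sum_t \sum_r conjc (A t r) * (a t * conjc (d r)) = \sum_r `|d r| ^+ 2.
  rewrite exchange_big /=; apply: eq_bigr => r _.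
  by rewrite sqr_normc /d mulr_suml; apply: eq_bigr => t _; rewrite mulrA.
under [X in _ <= _ * X]eq_bigr do rewrite normcJ.
rewrite ger0_norm ?sum_sqr_norm_ge0 // expr2 => dd_le.
apply: le_of_mulr_le dd_le; first exact: sum_sqr_norm_ge0.
by rewrite mulr_ge0 ?sum_sqr_norm_ge0.
Qed.

(* With M the reduced density matrix, d is A^* M, so sum |d|^2 = tr M^3 <= c tr M^2
   by adjoint_norm_le, while <A^*, d> = tr M^2; Cauchy-Schwarz, in the form
   |d - P A^*|^2 >= 0, then gives P^2 <= tr M^3 <= c P for P = tr M^2. *)
Lemma purity_le : purity A <= c.
Proof.
set P := purity A; set d := fun j r => \sum_t conjc (A t r) * reduced_dm A t j.
have d_le : \sum_j \sum_r `|d j r| ^+ 2 <= c * P.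
  rewrite /P /purity [X in _ <= _ * X]exchange_big mulr_sumr; apply: ler_sum => j _.
  exact: (adjoint_norm_le (fun t => reduced_dm A t j)).
have d_dotA : \sum_j \sum_r d j r * A j r = P.
  rewrite /P /purity [RHS]exchange_big /=; apply: eq_bigr => j _.
  under eq_bigr do rewrite /d mulr_suml.
  rewrite exchange_big /=; apply: eq_bigr => t _.
  rewrite sqr_normc conjc_reduced_dm /reduced_dm mulr_sumr; apply: eq_bigr => r _.
  ring.
have PR : conjc P = P by exact: conjc_purity.
have expand : \sum_j \sum_r `|d j r - P * conjc (A j r)| ^+ 2 =
    \sum_j \sum_r `|d j r| ^+ 2 - P * P.
  have pt j r : `|d j r - P * conjc (A j r)| ^+ 2 = `|d j r| ^+ 2
      - P * (d j r * A j r + conjc (d j r * A j r)) + P ^+ 2 * `|A j r| ^+ 2.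
    by rewrite !sqr_normc rmorphB !rmorphM /= conjcK PR; ring.
  under eq_bigr do under eq_bigr do rewrite pt.
  under eq_bigr do rewrite big_split sumrB /= -!mulr_sumr.
  rewrite big_split sumrB /= -!mulr_sumr.
  under [X in _ - P * X + _]eq_bigr do rewrite big_split /= -rmorph_sum.
  by rewrite big_split /= -rmorph_sum /= d_dotA PR A_normalized; ring.
apply: le_of_mulr_le; [exact: purity_ge0 | exact: c_ge0 |].
apply: le_trans d_le; rewrite -subr_ge0 -expand.
by apply: sumr_ge0 => j _; exact: sum_sqr_norm_ge0.
Qed.

End PurityBound.

Section SwapOverlap.
Variable R : realType.
Local Notation C := R[i].

(* <f (x) f| SWAP_T |f (x) f>, where SWAP_T exchanges the T-qubits of the two copies *)
Definition swap_overlap (X : finType) (T : {set X}) (f : qstate R X) : C :=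
  \sum_u \sum_v conjc (f u * f v) * (f (splice T v u) * f (splice T u v)).

Lemma swap_overlap_purity (X : finType) (T : {set X}) (f : qstate R X) :
  swap_overlap T f = purity (fun t r => f (@join_bits _ T t r)).
Proof.
rewrite /swap_overlap /purity (sum_join_bits T); apply: eq_bigr => t _.
under eq_bigr do rewrite (sum_join_bits T) exchange_big /=.
under eq_bigr do rewrite exchange_big /=.
rewrite exchange_big /=; apply: eq_bigr => t' _.
rewrite sqr_normc /reduced_dm rmorph_sum big_distrlr /= exchange_big /=.
apply: eq_bigr => r _; apply: eq_bigr => r' _.
by rewrite !splice_join /= !rmorphM /= conjcK; ring.
Qed.

Lemma swap_overlap_ge0 (X : finType) (T : {set X}) (f : qstate R X) :
  0 <= swap_overlap T f.
Proof. by rewrite swap_overlap_purity purity_ge0. Qed.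

Lemma conjc_swap_overlap (X : finType) (T : {set X}) (f : qstate R X) :
  conjc (swap_overlap T f) = swap_overlap T f.
Proof. by rewrite swap_overlap_purity conjc_purity. Qed.

Lemma swap_overlap_addC_le2 (X : finType) (T : {set X}) (f : qstate R X) :
  \sum_x `|f x| ^+ 2 = 1 -> swap_overlap T f + conjc (swap_overlap T f) <= 2.
Proof.
move=> f1; set g := fun u v => f u * f v.
have g1 : \sum_u \sum_v `|g u v| ^+ 2 = 1.
  rewrite -[RHS]mulr1 -{1}f1 mulr_suml; apply: eq_bigr => u _.
  by rewrite -f1 mulr_sumr; apply: eq_bigr => v _; rewrite normrM exprMn.
have g1_swap : \sum_u \sum_v `|g (splice T v u) (splice T u v)| ^+ 2 = 1.
  rewrite -g1 !pair_big /=.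
  rewrite (reindex_inj (h := fun p => (splice T p.2 p.1, splice T p.1 p.2))) /=.
    by apply: eq_bigr => -[u v] _ /=; rewrite !spliceK /g mulrC.
  move=> [u v] [u' v'] /= [e1 e2]; congr pair.
    by rewrite -(spliceK T u v) -(spliceK T u' v') e1 e2.
  by rewrite -(spliceK T v u) -(spliceK T v' u') e1 e2.
have -> : 2 = \sum_u \sum_v (`|g u v| ^+ 2 + `|g (splice T v u) (splice T u v)| ^+ 2) :> C.
  by under eq_bigr do rewrite big_split; rewrite big_split /= g1 g1_swap.
rewrite /swap_overlap rmorph_sum -big_split /=; apply: ler_sum => u _.
rewrite rmorph_sum -!big_split /=; apply: ler_sum => v _.
by rewrite -subr_ge0 -/(g u v) -/(g (splice T v u) _) -sqr_norm_sub exprn_ge0.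
Qed.

Lemma sum_sqmod_eq0 (I : finType) (a : I -> C) :
  \sum_i sqmod (a i) = 0 -> forall i, a i = 0.
Proof.
move/eqP; rewrite psumr_eq0 => [/allP a0 i|i _]; last exact: sqmod_ge0.
by apply/eqP; rewrite -sqmod_eq0; apply: a0; rewrite mem_index_enum.
Qed.

Lemma sum_sqmodZ (I : finType) (k : R) (a : I -> C) :
  \sum_i sqmod (k%:C%C * a i) = k ^+ 2 * \sum_i sqmod (a i).
Proof. by rewrite mulr_sumr; apply: eq_bigr => i _; exact: sqmodZ. Qed.

Lemma normalizing_scale (I : finType) (a : I -> C) :
  0 < \sum_i sqmod (a i) -> exists2 k : R, 0 < k & k ^+ 2 * \sum_i sqmod (a i) = 1.
Proof.
move=> a_gt0; exists (Num.sqrt (\sum_i sqmod (a i)))^-1; first by rewrite invr_gt0 sqrtr_gt0.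
by rewrite exprVn sqr_sqrtr ?mulVf ?gt_eqF // ltW.
Qed.

Definition prod_state (X : finType) (T : {set X}) (a : qstate R (subreg T))
    (b : qstate R (subreg (~: T))) : qstate R X :=
  fun x => a (restr T x) * b (restr (~: T) x).

Lemma separable_prod_state (X : finType) (T : {set X}) (a : qstate R (subreg T))
    (b : qstate R (subreg (~: T))) :
  T != finset.set0 -> T != [set: X] -> normalized a -> normalized b ->
  separable (prod_state a b).
Proof. by move=> T0 TT a1 b1; exists T; split => //; exists a, b. Qed.

Lemma inner_join (X : finType) (T : {set X}) (f : qstate R X)
    (a : qstate R (subreg T)) (b : qstate R (subreg (~: T))) :
  inner f (prod_state a b) =
  \sum_t \sum_r conjc (f (join_bits t r)) * (a t * b r).
Proof.
rewrite /inner /prod_state (sum_join_bits T); apply: eq_bigr => t _; apply: eq_bigr => r _.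
by rewrite restr_join_l restr_join_r.
Qed.

Lemma far_overlap_le (X : finType) (T : {set X}) (f : qstate R X) (eps : R) :
  T != finset.set0 -> T != [set: X] -> far_from_separable eps f ->
  forall (a : bits (subreg T) -> C) (b : bits (subreg (~: T)) -> C),
  `|\sum_t \sum_r conjc (f (join_bits t r)) * (a t * b r)| ^+ 2 <=
    (1 - eps ^+ 2)%:C%C * (\sum_t `|a t| ^+ 2) * (\sum_r `|b r| ^+ 2).
Proof.
move=> T0 TT far a b; rewrite -!sum_sqmodE -sqmodE -!rmorphM /= lecR.
set S := \sum_t _.
have [a0|a_gt0] := eqVneq (\sum_t sqmod (a t)) 0.
  rewrite /S big1 => [|t _]; first by rewrite sqmod0 a0 mulr0 mul0r.
  by rewrite big1 // => r _; rewrite (sum_sqmod_eq0 a0) mul0r mulr0.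
have [b0|b_gt0] := eqVneq (\sum_r sqmod (b r)) 0.
  rewrite /S big1 => [|t _]; first by rewrite sqmod0 b0 mulr0.
  by rewrite big1 // => r _; rewrite (sum_sqmod_eq0 b0) !mulr0.
have sum_gt0 (I : finType) (c : I -> C) : \sum_i sqmod (c i) != 0 -> 0 < \sum_i sqmod (c i).
  by rewrite lt_def => ->; apply: sumr_ge0 => i _; exact: sqmod_ge0.
have [ka ka_gt0 ka1] := normalizing_scale (sum_gt0 _ _ a_gt0).
have [kb kb_gt0 kb1] := normalizing_scale (sum_gt0 _ _ b_gt0).
have a1 : normalized (fun t => ka%:C%C * a t) by rewrite /normalized sum_sqmodZ ka1.
have b1 : normalized (fun r => kb%:C%C * b r) by rewrite /normalized sum_sqmodZ kb1.
have := far _ (separable_prod_state T0 TT a1 b1); rewrite inner_join.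
have -> : \sum_t \sum_r conjc (f (join_bits t r)) * (ka%:C%C * a t * (kb%:C%C * b r)) =
          (ka * kb)%:C%C * S.
  rewrite /S rmorphM mulr_sumr; apply: eq_bigr => t _.
  by rewrite mulr_sumr; apply: eq_bigr => r _; ring.
rewrite sqmodZ => scaled_le.
rewrite -(ler_pM2l (_ : 0 < (ka * kb) ^+ 2)) ?exprn_gt0 ?mulr_gt0 //.
apply: (le_trans scaled_le); rewrite le_eqVlt; apply/orP; left; apply/eqP.
transitivity ((1 - eps ^+ 2) * (ka ^+ 2 * \sum_t sqmod (a t)) * (kb ^+ 2 * \sum_r sqmod (b r))).
  by rewrite ka1 kb1 !mulr1.
by ring.
Qed.

Lemma swap_overlap_far_le (X : finType) (T : {set X}) (f : qstate R X) (eps : R) :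
  T != finset.set0 -> T != [set: X] -> normalized f -> far_from_separable eps f ->
  eps ^+ 2 <= 1 -> swap_overlap T f <= (1 - eps ^+ 2)%:C%C.
Proof.
move=> T0 TT f1 far eps_le1; rewrite swap_overlap_purity; apply: purity_le.
- by rewrite lecR subr_ge0.
- exact: far_overlap_le.
- by rewrite -(normalizedE f1) (sum_join_bits T).
Qed.

Section ProductState.
Variables (X : finType) (T : {set X}).
Variables (a : qstate R (subreg T)) (b : qstate R (subreg (~: T))).

Lemma prod_state_join t r : prod_state a b (join_bits t r) = a t * b r.
Proof. by rewrite /prod_state restr_join_l restr_join_r. Qed.

Lemma sum_sqr_norm_prod_state :
  \sum_x `|prod_state a b x| ^+ 2 = (\sum_t `|a t| ^+ 2) * (\sum_r `|b r| ^+ 2).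
Proof.
rewrite (sum_join_bits T) big_distrlr; apply: eq_bigr => t _; apply: eq_bigr => r _.
by rewrite prod_state_join normrM exprMn.
Qed.

Lemma swap_overlap_prod_state (S : {set X}) :
  swap_overlap S (prod_state a b) =
  swap_overlap [set i : subreg T | val i \in S] a *
  swap_overlap [set i : subreg (~: T) | val i \in S] b.
Proof.
rewrite /swap_overlap (sum_join_bits T).
under eq_bigr do under eq_bigr do rewrite (sum_join_bits T).
rewrite [RHS]big_distrlr /=; apply: eq_bigr => t _; apply: eq_bigr => r _.
rewrite [RHS]big_distrlr /=; apply: eq_bigr => t' _; apply: eq_bigr => r' _.
by rewrite /prod_state !restr_splice !restr_join_l !restr_join_r !rmorphM /=; ring.
Qed.

Lemma prod_state_splice (u v : bits X) :
  prod_state a b (splice T v u) * prod_state a b (splice T u v) =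
  prod_state a b u * prod_state a b v.
Proof.
have restr_l x y : restr T (splice T x y) = restr T x.
  by apply/ffunP => i; rewrite !ffunE (valP i).
have restr_r x y : restr (~: T) (splice T x y) = restr (~: T) y.
  by apply/ffunP => i; rewrite !ffunE; have := valP i; rewrite inE => /negbTE ->.
by rewrite /prod_state !restr_l !restr_r; ring.
Qed.

End ProductState.

End SwapOverlap.

Section TwoQubits.
Variables (T : finType) (q1 q2 : T).
Hypothesis q12 : q1 != q2.

Definition set_pair (x : bits T) (b1 b2 : bool) : bits T :=
  [ffun j => if j == q1 then b1 else if j == q2 then b2 else x j].

Definition agree_off (x y : bits T) := [forall j, (j != q1) && (j != q2) ==> (y j == x j)].

Lemma set_pair_q1 x b1 b2 : set_pair x b1 b2 q1 = b1.
Proof. by rewrite ffunE eqxx. Qed.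

Lemma set_pair_q2 x b1 b2 : set_pair x b1 b2 q2 = b2.
Proof. by rewrite ffunE eq_sym (negbTE q12) eqxx. Qed.

Lemma set_pairK x b1 b2 c1 c2 : set_pair (set_pair x b1 b2) c1 c2 = set_pair x c1 c2.
Proof. by apply/ffunP => j; rewrite !ffunE; case: eqP => //; case: eqP. Qed.

Lemma agree_off_set_pair x b1 b2 : agree_off x (set_pair x b1 b2).
Proof.
by apply/forallP => j; apply/implyP => /andP[/negbTE j1 /negbTE j2]; rewrite ffunE j1 j2.
Qed.

Lemma agree_offE x y : agree_off x y -> set_pair x (y q1) (y q2) = y.
Proof.
move/forallP => xy; apply/ffunP => j; rewrite !ffunE.
case: eqP => [->//|/eqP j1]; case: eqP => [->//|/eqP j2].
by have /implyP := xy j; rewrite j1 j2 => /(_ isT) /eqP.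
Qed.

Lemma sum_agree_off (V : nmodType) x (F : bits T -> V) :
  \sum_(y | agree_off x y) F y = \sum_(b1 : bool) \sum_(b2 : bool) F (set_pair x b1 b2).
Proof.
rewrite pair_big /=.
rewrite (reindex_onto (fun p => set_pair x p.1 p.2) (fun y => (y q1, y q2))) /=.
  by apply: eq_bigl => -[b1 b2] /=; rewrite agree_off_set_pair set_pair_q1 set_pair_q2 eqxx.
by move=> y /agree_offE.
Qed.

Lemma sum_by_pair (V : nmodType) (F : bits T -> V) :
  \sum_x F x = \sum_(x0 : bits T | ~~ x0 q1 && ~~ x0 q2)
                 \sum_(b1 : bool) \sum_(b2 : bool) F (set_pair x0 b1 b2).
Proof.
rewrite (partition_big (fun x => set_pair x false false)
                       (fun x0 : bits T => ~~ x0 q1 && ~~ x0 q2)) /=;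
  last by move=> x _; rewrite set_pair_q1 set_pair_q2.
apply: eq_bigr => x0 /andP[/negbTE x01 /negbTE x02]; rewrite -sum_agree_off.
apply: eq_bigl => x; apply/eqP/idP => [<-|/agree_offE <-].
  by apply/forallP => j; apply/implyP => /andP[/negbTE j1 /negbTE j2]; rewrite ffunE j1 j2.
rewrite set_pairK; apply/ffunP => j; rewrite ffunE.
by case: eqP => [->|_]; [|case: eqP => [->|_]].
Qed.

End TwoQubits.

Definition unpair (k : 'I_4) : bool * bool := ((2 <= k)%N, odd k).

Lemma pair_indexK b1 b2 : unpair (pair_index b1 b2) = (b1, b2).
Proof. by case: b1; case: b2; rewrite /unpair /pair_index /= inordK. Qed.

Lemma sum_pair_index (V : nmodType) (F : 'I_4 -> V) :
  \sum_(b1 : bool) \sum_(b2 : bool) F (pair_index b1 b2) = \sum_k F k.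
Proof.
rewrite pair_big /= (reindex (fun p => pair_index p.1 p.2)) //=.
exists unpair => [[b1 b2] _|k _] /=; first by rewrite pair_indexK.
apply: val_inj; rewrite /pair_index /unpair /= inordK; last by case: (2 <= k)%N; case: (odd k).
by case: k => -[|[|[|[|]]]].
Qed.

Section Circuits.
Variables (R : realType) (T : finType).
Local Notation C := R[i].

Lemma apply_gateE (g : gate R T) (v : qstate R T) x : gq1 g != gq2 g ->
  apply_gate g v x = \sum_(b1 : bool) \sum_(b2 : bool)
    gU g (pair_index (x (gq1 g)) (x (gq2 g))) (pair_index b1 b2) *
    v (set_pair (gq1 g) (gq2 g) x b1 b2).
Proof.
move=> g12; rewrite /apply_gate (sum_agree_off g12).
by apply: eq_bigr => b1 _; apply: eq_bigr => b2 _; rewrite set_pair_q1 (set_pair_q2 g12).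
Qed.

Lemma unitary4_sum_sqr_norm (U : 'M[C]_4) (w : 'I_4 -> C) : unitary4 U ->
  \sum_k `|\sum_k' U k k' * w k'| ^+ 2 = \sum_k `|w k| ^+ 2.
Proof.
rewrite /unitary4 => /mulmx1C UU.
have col_orth a b : \sum_k conjc (U k b) * U k a = (b == a)%:R.
  have := congr1 (fun M : 'M[C]_4 => M b a) UU; rewrite !mxE => <-.
  by apply: eq_bigr => k _; rewrite !mxE.
transitivity (\sum_a \sum_b w a * conjc (w b) * \sum_k conjc (U k b) * U k a).
  under eq_bigr do rewrite sqr_normc rmorph_sum big_distrlr /=.
  rewrite exchange_big /=; apply: eq_bigr => a _.
  rewrite exchange_big /=; apply: eq_bigr => b _.
  by rewrite mulr_sumr; apply: eq_bigr => k _; rewrite rmorphM /=; ring.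
apply: eq_bigr => a _; rewrite (bigD1 a) //= col_orth eqxx mulr1 big1 ?addr0 ?sqr_normc //.
by move=> b /negbTE ba; rewrite col_orth ba mulr0.
Qed.

Lemma apply_gate_sum_sqr_norm (g : gate R T) (v : qstate R T) : gate_ok g ->
  \sum_x `|apply_gate g v x| ^+ 2 = \sum_x `|v x| ^+ 2.
Proof.
move=> [g12 gU_unitary]; rewrite (sum_by_pair g12) [RHS](sum_by_pair g12).
apply: eq_bigr => x0 _.
pose w k := v (set_pair (gq1 g) (gq2 g) x0 (unpair k).1 (unpair k).2).
have gate_w b1 b2 : apply_gate g v (set_pair (gq1 g) (gq2 g) x0 b1 b2) =
                    \sum_k gU g (pair_index b1 b2) k * w k.
  rewrite apply_gateE // set_pair_q1 (set_pair_q2 g12) -sum_pair_index.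
  by apply: eq_bigr => c1 _; apply: eq_bigr => c2 _; rewrite set_pairK /w pair_indexK.
have w_pair b1 b2 : v (set_pair (gq1 g) (gq2 g) x0 b1 b2) = w (pair_index b1 b2).
  by rewrite /w pair_indexK.
under eq_bigr do under eq_bigr do rewrite gate_w.
under [RHS]eq_bigr do under eq_bigr do rewrite w_pair.
rewrite (sum_pair_index (fun k => `|\sum_k' gU g k k' * w k'| ^+ 2)).
rewrite (sum_pair_index (fun k => `|w k| ^+ 2)).
exact: unitary4_sum_sqr_norm.
Qed.

Lemma apply_gate_lin (g : gate R T) (a b : C) (v w : qstate R T) :
  apply_gate g (fun y => a * v y + b * w y) =
  (fun x => a * apply_gate g v x + b * apply_gate g w x).
Proof.
apply: boolp.funext => x; rewrite /apply_gate !mulr_sumr -big_split /=.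
by apply: eq_bigr => y _; ring.
Qed.

Lemma apply_layer_lin (l : seq (gate R T)) (a b : C) (v w : qstate R T) :
  apply_layer l (fun y => a * v y + b * w y) =
  (fun x => a * apply_layer l v x + b * apply_layer l w x).
Proof.
elim: l v w => [|g l IHl] v w //.
by rewrite /apply_layer /= -!/(apply_layer _ _) apply_gate_lin IHl.
Qed.

Lemma apply_layer_sum_sqr_norm (l : seq (gate R T)) (v : qstate R T) :
  (forall g, List.In g l -> gate_ok g) ->
  \sum_x `|apply_layer l v x| ^+ 2 = \sum_x `|v x| ^+ 2.
Proof.
elim: l v => [|g l IHl] v //= l_ok.
rewrite /apply_layer /= -/(apply_layer _ _) IHl => [|h hl]; last by apply: l_ok; right.
by apply: apply_gate_sum_sqr_norm; apply: l_ok; left.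
Qed.

End Circuits.

Section BellBasis.
Variable R : realType.
Local Notation C := R[i].

(* Rows 0..3 are sqrt 2 times Phi+, Psi+, Phi-, Psi- in the basis 00, 01, 10, 11;
   only the singlet Psi- (row 3) is antisymmetric under exchanging the two qubits. *)
Definition bell_entry (k l : 'I_4) : R :=
  match val k, val l with
  | 0, 0 | 0, 3 | 1, 1 | 1, 2 | 2, 0 | 3, 1 => 1
  | 2, 3 | 3, 2 => -1
  | _, _ => 0
  end.

Definition bell_mx : 'M[C]_4 := \matrix_(k, l) ((Num.sqrt 2)^-1 * bell_entry k l)%:C%C.

Definition singlet_sign (k : 'I_4) : R := if val k == 3%N then -1 else 1.

Lemma bell_mx_swap k b1 b2 :
  bell_mx k (pair_index b2 b1) = (singlet_sign k)%:C%C * bell_mx k (pair_index b1 b2).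
Proof.
rewrite !mxE -rmorphM /= mulrCA; congr ((Num.sqrt 2)^-1 * _)%:C%C.
by case: k => -[|[|[|[|k]]]] hk; case: b1; case: b2;
  rewrite /bell_entry /singlet_sign /pair_index /= ?inordK //=; lra.
Qed.

Lemma bell_mx_unitary : unitary4 bell_mx.
Proof.
apply/matrixP => k l; rewrite !mxE.
under eq_bigr do rewrite !mxE conjc_real -rmorphM /=.
rewrite -rmorph_sum /= -(rmorph_nat (@complex.real_complex R)); congr (_%:C)%C.
have s2 : (Num.sqrt 2)^-1 * (Num.sqrt 2)^-1 = 2^-1 :> R.
  by rewrite -invfM -expr2 sqr_sqrtr.
rewrite !big_ord_recr big_ord0 /=.
by case: k => -[|[|[|[|k]]]] hk; case: l => -[|[|[|[|l]]]] hl;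
  rewrite /bell_entry /= ?inordK //=; nra.
Qed.

End BellBasis.

Section BellLayer.
Variables (R : realType) (n : nat).
Local Notation C := R[i].
Local Notation reg := (register n 2 0).

Definition copy0 (i : 'I_n) : reg := inl (ord0, i).
Definition copy1 (i : 'I_n) : reg := inl (ord_max, i).

Lemma copy0_neq1 i j : copy0 i != copy1 j.
Proof. by apply/eqP => -[]. Qed.

Lemma eq_copy0 i j : (copy0 i == copy0 j) = (i == j).
Proof. by apply/eqP/eqP => [[]|->]. Qed.

Lemma eq_copy1 i j : (copy1 i == copy1 j) = (i == j).
Proof. by apply/eqP/eqP => [[]|->]. Qed.

Variant copy_spec : reg -> Type :=
  | Copy0 i : copy_spec (copy0 i)
  | Copy1 i : copy_spec (copy1 i).

Lemma copyP q : copy_spec q.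
Proof.
case: q => [[[[|[|j]] lt_j2] i]|[]//].
- by rewrite (_ : Ordinal lt_j2 = ord0); [exact: Copy0 | exact: val_inj].
- by rewrite (_ : Ordinal lt_j2 = ord_max); [exact: Copy1 | exact: val_inj].
- by [].
Qed.

Definition bell_gate (i : 'I_n) : gate R reg := Gate (copy0 i) (copy1 i) (bell_mx R).
Definition bell_layer : seq (gate R reg) := [seq bell_gate i | i <- enum 'I_n].

Definition swap_qubit (A : {set 'I_n}) (q : reg) : reg :=
  if q is inl (j, i) then (if i \in A then inl (rev_ord j, i) else q) else q.

Definition swap_copies (A : {set 'I_n}) (x : bits reg) : bits reg :=
  [ffun q => x (swap_qubit A q)].

Definition parity_sign (A : {set 'I_n}) (x : bits reg) : C :=
  \prod_(i in A) (singlet_sign R (pair_index (x (copy0 i)) (x (copy1 i))))%:C%C.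

Lemma swap_qubit_copy0 A i : swap_qubit A (copy0 i) = if i \in A then copy1 i else copy0 i.
Proof. by rewrite /swap_qubit /copy0 /copy1; case: ifP => // _; do 2 f_equal; apply: val_inj. Qed.

Lemma swap_qubit_copy1 A i : swap_qubit A (copy1 i) = if i \in A then copy0 i else copy1 i.
Proof. by rewrite /swap_qubit /copy0 /copy1; case: ifP => // _; do 2 f_equal; apply: val_inj. Qed.

Lemma swap_copiesK A : involutive (swap_copies A).
Proof.
move=> x; apply/ffunP => q; rewrite !ffunE; congr (x _).
by case: (copyP q) => i; rewrite !(swap_qubit_copy0, swap_qubit_copy1);
  case: ifP => iA; rewrite !(swap_qubit_copy0, swap_qubit_copy1) iA.
Qed.

Lemma swap_copies0 x : swap_copies finset.set0 x = x.
Proof.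
apply/ffunP => q; rewrite ffunE.
by case: (copyP q) => i; rewrite !(swap_qubit_copy0, swap_qubit_copy1) inE.
Qed.

Lemma swap_copies1_set_pair i x b1 b2 :
  swap_copies [set i] (set_pair (copy0 i) (copy1 i) x b1 b2) =
  set_pair (copy0 i) (copy1 i) x b2 b1.
Proof.
apply/ffunP => q; rewrite !ffunE.
case: (copyP q) => k; rewrite ?swap_qubit_copy0 ?swap_qubit_copy1 inE;
  have [->|ki] := eqVneq k i; rewrite ?ffunE ?eqxx ?eq_copy0 ?eq_copy1 ?(negbTE ki) //;
  by rewrite ?(negbTE (copy0_neq1 _ _)) // eq_sym (negbTE (copy0_neq1 _ _)).
Qed.

Lemma bell_gate_ok i : gate_ok (bell_gate i).
Proof. by split; [exact: copy0_neq1 | exact: bell_mx_unitary]. Qed.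

Lemma apply_bell_gate_swap1 i (v : qstate R reg) x :
  apply_gate (bell_gate i) (fun y => v (swap_copies [set i] y)) x =
  (singlet_sign R (pair_index (x (copy0 i)) (x (copy1 i))))%:C%C *
  apply_gate (bell_gate i) v x.
Proof.
rewrite !apply_gateE ?copy0_neq1 //=.
under eq_bigr do under eq_bigr do rewrite swap_copies1_set_pair.
rewrite exchange_big mulr_sumr; apply: eq_bigr => b2 _.
by rewrite mulr_sumr; apply: eq_bigr => b1 _; rewrite bell_mx_swap mulrA.
Qed.

Lemma swap_qubit_eq_copy (A : {set 'I_n}) (j : 'I_n) (q : reg) : j \notin A ->
  (swap_qubit A q == copy0 j) = (q == copy0 j) /\
  (swap_qubit A q == copy1 j) = (q == copy1 j).
Proof.
move=> jA; case: (copyP q) => i; rewrite !(swap_qubit_copy0, swap_qubit_copy1).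
all: case: ifP => iA //; have /negbTE ij : i != j by apply: contraNneq jA => <-.
all: by rewrite !(eq_copy0, eq_copy1) ij eq_sym (negbTE (copy0_neq1 _ _))
                (negbTE (copy0_neq1 _ _)).
Qed.

Lemma apply_bell_gate_swap_other (j : 'I_n) (A : {set 'I_n}) (v : qstate R reg) x : j \notin A ->
  apply_gate (bell_gate j) (fun y => v (swap_copies A y)) x =
  apply_gate (bell_gate j) v (swap_copies A x).
Proof.
move=> jA; rewrite !apply_gateE ?copy0_neq1 //= !ffunE.
rewrite swap_qubit_copy0 swap_qubit_copy1 (negbTE jA).
apply: eq_bigr => b1 _; apply: eq_bigr => b2 _; congr (_ * v _).
by apply/ffunP => q; rewrite !ffunE; have [-> ->] := swap_qubit_eq_copy q jA.
Qed.

Lemma parity_sign_set_pair (j : 'I_n) (B : {set 'I_n}) x b1 b2 : j \notin B ->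
  parity_sign B (set_pair (copy0 j) (copy1 j) x b1 b2) = parity_sign B x.
Proof.
move=> jB; apply: eq_bigr => i iB.
have /negbTE ij : i != j by apply: contraNneq jB => <-.
by rewrite !ffunE eq_copy0 eq_copy1 ij (negbTE (copy0_neq1 _ _)) eq_sym (negbTE (copy0_neq1 _ _)).
Qed.

Lemma apply_bell_gate_parity (j : 'I_n) (B : {set 'I_n}) (v : qstate R reg) x : j \notin B ->
  apply_gate (bell_gate j) (fun y => parity_sign B y * v y) x =
  parity_sign B x * apply_gate (bell_gate j) v x.
Proof.
move=> jB; rewrite !apply_gateE ?copy0_neq1 //= mulr_sumr; apply: eq_bigr => b1 _.
by rewrite mulr_sumr; apply: eq_bigr => b2 _; rewrite parity_sign_set_pair // mulrCA.
Qed.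

Lemma swap_copiesD1 (A : {set 'I_n}) (j : 'I_n) (x : bits reg) : j \in A ->
  swap_copies A x = swap_copies (A :\ j) (swap_copies [set j] x).
Proof.
move=> jA; apply/ffunP => q; rewrite !ffunE; congr (x _).
case: (copyP q) => i; rewrite !(swap_qubit_copy0, swap_qubit_copy1) (fun_if (swap_qubit [set j])).
all: rewrite !(swap_qubit_copy0, swap_qubit_copy1) !inE.
all: by have [->|/negbTE ij] := eqVneq i j; rewrite ?jA ?eqxx ?ij.
Qed.

(* each Bell gate of a swapped pair absorbs the swap into the sign of its outcome *)
Lemma apply_bell_gates_swap (L : seq 'I_n) : uniq L ->
  forall (S : {set 'I_n}) (v : qstate R reg) x,
  apply_layer (map bell_gate L) (fun y => v (swap_copies S y)) x =
  parity_sign [set i in S | i \in L] x *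
  apply_layer (map bell_gate L) v (swap_copies [set i in S | i \notin L] x).
Proof.
elim/last_ind: L => [|L j IHL] uniqL S v x.
  rewrite (_ : [set i in S | i \in [::]] = finset.set0); last by apply/setP => i; rewrite !inE andbF.
  rewrite (_ : [set i in S | i \notin [::]] = S); last by apply/setP => i; rewrite !inE andbT.
  by rewrite /parity_sign big_set0 mul1r.
move: uniqL; rewrite rcons_uniq => /andP[jL uniqL].
rewrite /apply_layer map_rcons !foldl_rcons -!/(apply_layer _ _).
set B := [set i in S | i \in L]; set A := [set i in S | i \notin L].
have -> : apply_layer (map bell_gate L) (fun y => v (swap_copies S y)) =
          (fun y => parity_sign B y * apply_layer (map bell_gate L) v (swap_copies A y)).
  by apply: boolp.funext => y; rewrite IHL.
set W := apply_layer (map bell_gate L) v.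
have jB : j \notin B by rewrite inE (negbTE jL) andbF.
rewrite apply_bell_gate_parity //.
have [jS|jS] := boolP (j \in S); last first.
  have -> : [set i in S | i \notin rcons L j] = A.
    by apply/setP => i; rewrite !inE mem_rcons in_cons; case: eqP => [->|]; rewrite ?(negbTE jS).
  have -> : [set i in S | i \in rcons L j] = B.
    by apply/setP => i; rewrite !inE mem_rcons in_cons; case: eqP => [->|]; rewrite ?(negbTE jS).
  by rewrite apply_bell_gate_swap_other // inE (negbTE jS).
have jA : j \in A by rewrite inE jS jL.
have -> : (fun y => W (swap_copies A y)) =
          (fun y => (fun z => W (swap_copies (A :\ j) z)) (swap_copies [set j] y)).
  by apply: boolp.funext => y; rewrite (swap_copiesD1 _ jA).
rewrite (apply_bell_gate_swap1 j (fun z => W (swap_copies (A :\ j) z))).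
rewrite apply_bell_gate_swap_other ?setD11 //.
have -> : [set i in S | i \notin rcons L j] = A :\ j.
  by apply/setP => i; rewrite !inE mem_rcons in_cons negb_or; case: (i == j); rewrite ?andbF.
have -> : [set i in S | i \in rcons L j] = j |: B.
  by apply/setP => i; rewrite !inE mem_rcons in_cons; case: eqP => [->|]; rewrite ?jS.
by rewrite /parity_sign big_setU1 //= -/(parity_sign B x); ring.
Qed.

Lemma bell_layer_swap (S : {set 'I_n}) (v : qstate R reg) x :
  apply_layer bell_layer (fun y => v (swap_copies S y)) x =
  parity_sign S x * apply_layer bell_layer v x.
Proof.
rewrite apply_bell_gates_swap ?enum_uniq //.
rewrite (_ : [set i in S | i \in enum 'I_n] = S); last by apply/setP => i; rewrite !inE mem_enum andbT.
rewrite (_ : [set i in S | i \notin enum 'I_n] = finset.set0); last by apply/setP => i; rewrite !inE mem_enum andbF.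
by rewrite swap_copies0.
Qed.

Lemma bell_gates_layer_ok (L : seq 'I_n) : uniq L -> layer_ok (map bell_gate L).
Proof.
have disj i j : i != j -> [disjoint gate_support (bell_gate i) & gate_support (bell_gate j)].
  move=> ij; rewrite -setI_eq0; apply/eqP/setP => q; rewrite !inE /=.
  apply/negP => /andP[/orP[]/eqP-> /orP[]]; rewrite ?eq_copy0 ?eq_copy1 ?(negbTE ij)
    ?(negbTE (copy0_neq1 _ _)) // eq_sym (negbTE (copy0_neq1 _ _)) //.
elim: L => [|i L IHL] //= /andP[iL uniqL]; split; [exact: bell_gate_ok | | exact: IHL].
elim: L iL {IHL uniqL} => [|j L IHL] //=; rewrite in_cons negb_or => /andP[ij iL].
by constructor; [exact: disj | exact: IHL].
Qed.

Lemma bell_layer_sum_sqr_norm (v : qstate R reg) :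
  \sum_x `|apply_layer bell_layer v x| ^+ 2 = \sum_x `|v x| ^+ 2.
Proof.
by apply: apply_layer_sum_sqr_norm => g /List.in_map_iff [i [<- _]]; exact: bell_gate_ok.
Qed.

Lemma parity_sign_pm (S : {set 'I_n}) x : parity_sign S x = 1 \/ parity_sign S x = -1.
Proof.
apply: (big_ind (fun z : C => z = 1 \/ z = -1)); first by left.
  by move=> a b [->|->] [->|->]; rewrite ?mulr1 ?mul1r ?mulrNN ?mulr1; by [left | right].
by move=> i _; rewrite /singlet_sign; case: ifP => _; rewrite ?rmorphN rmorph1; by [left | right].
Qed.

Lemma sum_swap_copies (S : {set 'I_n}) (F : bits reg -> C) :
  \sum_y F (swap_copies S y) = \sum_y F y.
Proof. by rewrite [RHS](reindex_inj (can_inj (swap_copiesK S))). Qed.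

(* Projecting onto the +1 eigenspace of SWAP_S before measuring is invisible on
   even-parity outcomes and kills the odd ones, since the Bell layer maps SWAP_S
   to the parity sign. *)
Lemma prob_even_parity (v : qstate R reg) (S : {set 'I_n}) :
  \sum_y `|v y| ^+ 2 = 1 ->
  \sum_(x | parity_sign S x == 1) `|apply_layer bell_layer v x| ^+ 2 =
  (2 + \sum_y conjc (v y) * v (swap_copies S y) +
   conjc (\sum_y conjc (v y) * v (swap_copies S y))) / 4.
Proof.
move=> v1; pose w y := 2^-1 * v y + 2^-1 * v (swap_copies S y).
have two_neq0 : (2 : C) != 0 by rewrite pnatr_eq0.
have out_w x : apply_layer bell_layer w x =
               if parity_sign S x == 1 then apply_layer bell_layer v x else 0.
  rewrite /w apply_layer_lin bell_layer_swap.
  case: (parity_sign_pm S x) => ->; first by rewrite eqxx; field.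
  suff /negbTE -> : (-1 : C) != 1 by ring.
  by rewrite -subr_eq0 -opprD oppr_eq0 (_ : 1 + 1 = 2) ?pnatr_eq0.
rewrite big_mkcond /=.
transitivity (\sum_x `|apply_layer bell_layer w x| ^+ 2).
  by apply: eq_bigr => x _; rewrite out_w; case: ifP; rewrite ?normr0 ?expr0n.
rewrite bell_layer_sum_sqr_norm /w.
have half_sum a b : `|2^-1 * a + 2^-1 * b| ^+ 2 =
    (`|a| ^+ 2 + `|b| ^+ 2 + (conjc a * b + conjc (conjc a * b))) / 4 :> C.
  have conj_half : conjc (2^-1 : C) = 2^-1 by rewrite conjc_inv conjc_nat.
  have conjD (z z' : C) : conjc (z + z') = conjc z + conjc z' by exact: rmorphD.
  have conjM (z z' : C) : conjc (z * z') = conjc z * conjc z' by exact: rmorphM.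
  rewrite !sqr_normc conjD !conjM conj_half conjcK.
  by rewrite (_ : 4 = 2 * 2 :> C) -?natrM //; field.
rewrite (eq_bigr _ (fun y _ => half_sum (v y) (v (swap_copies S y)))).
rewrite -mulr_suml !big_split /= (sum_swap_copies S (fun y => `|v y| ^+ 2)) v1 rmorph_sum.
by congr (_ / _); ring.
Qed.

Lemma odd_parity_out0 (v : qstate R reg) (S : {set 'I_n}) :
  (forall y, v (swap_copies S y) = v y) ->
  forall x, parity_sign S x != 1 -> apply_layer bell_layer v x = 0.
Proof.
move=> v_sym x odd_x.
have out_sign : apply_layer bell_layer v x = parity_sign S x * apply_layer bell_layer v x.
  by rewrite -bell_layer_swap; congr apply_layer; apply: boolp.funext => y; rewrite v_sym.
case: (parity_sign_pm S x) out_sign odd_x => ->; rewrite ?eqxx // mulN1r => /eqP.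
by rewrite -subr_eq0 opprK -mulr2n mulrn_eq0 => /eqP.
Qed.

End BellLayer.

Section TwoCopies.
Variables (R : realType) (n : nat).
Local Notation C := R[i].
Local Notation reg := (register n 2 0).

Definition two_copies (u u' : bits 'I_n) : bits reg :=
  [ffun q => if q is inl (j, i) then (if j == ord0 then u i else u' i) else false].

Definition copy_bits (j : 'I_2) (y : bits reg) : bits 'I_n := [ffun i => y (inl (j, i))].

Lemma two_copies_bits y : two_copies (copy_bits ord0 y) (copy_bits ord_max y) = y.
Proof.
apply/ffunP => q; rewrite ffunE.
by case: (copyP q) => i /=; rewrite ffunE.
Qed.

Lemma sum_two_copies (V : nmodType) (F : bits reg -> V) :
  \sum_y F y = \sum_u \sum_u' F (two_copies u u').
Proof.
rewrite pair_big /= (reindex (fun p => two_copies p.1 p.2)) //=.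
exists (fun y => (copy_bits ord0 y, copy_bits ord_max y)) => [[u u'] _|y _] /=.
  by congr pair; apply/ffunP => i; rewrite !ffunE.
exact: two_copies_bits.
Qed.

Lemma input_state_two_copies (psi : qstate R 'I_n) u u' :
  @input_state R n 2 0 psi (two_copies u u') = psi u * psi u'.
Proof.
rewrite /input_state (_ : [forall t, _] = true); last by apply/forallP => -[].
rewrite mulr1 !big_ord_recr big_ord0 /= mul1r.
by congr (psi _ * psi _); apply/ffunP => i; rewrite !ffunE.
Qed.

Lemma swap_copies_two_copies (S : {set 'I_n}) u u' :
  swap_copies S (two_copies u u') = two_copies (splice S u' u) (splice S u u').
Proof.
apply/ffunP => q; rewrite !ffunE.
case: (copyP q) => i; rewrite !(swap_qubit_copy0, swap_qubit_copy1).
all: by case: ifP => iS /=; rewrite ffunE iS.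
Qed.

Lemma input_state_sum_sqr_norm (psi : qstate R 'I_n) : \sum_x `|psi x| ^+ 2 = 1 ->
  \sum_y `|@input_state R n 2 0 psi y| ^+ 2 = 1.
Proof.
move=> psi1; rewrite sum_two_copies -[RHS]mulr1 -{1}psi1 mulr_suml.
apply: eq_bigr => u _; rewrite -psi1 mulr_sumr; apply: eq_bigr => u' _.
by rewrite input_state_two_copies normrM exprMn.
Qed.

Lemma input_state_swap_overlap (psi : qstate R 'I_n) (S : {set 'I_n}) :
  \sum_y conjc (@input_state R n 2 0 psi y) * @input_state R n 2 0 psi (swap_copies S y) =
  swap_overlap S psi.
Proof.
rewrite sum_two_copies; apply: eq_bigr => u _; apply: eq_bigr => u' _.
by rewrite swap_copies_two_copies !input_state_two_copies.
Qed.

End TwoCopies.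

Lemma balanced_cut_splits (n : nat) (C S : {set 'I_n}) :
  ~~ odd n -> #|C| = n./2 -> #|S| = n./2 -> S != C -> S != ~: C ->
  [set i : subreg C | val i \in S] != finset.set0 /\
  [set i : subreg C | val i \in S] != [set: subreg C].
Proof.
move=> n_even cardC cardS SC ScC.
have cardCc : #|~: C| = n./2.
  have := cardsC C; rewrite cardC card_ord.
  have := odd_double_half n; rewrite (negbTE n_even) add0n -addnn => n_halves n_split.
  by apply/eqP; rewrite -(eqn_add2l n./2) n_split n_halves.
split.
  apply: contraNneq ScC => S1_0; apply/eqP/setP/subset_cardP; first by rewrite cardS cardCc.
  apply/fintype.subsetP => i iS; rewrite inE; apply: contraT => /negPn iC.
  have : (exist _ i iC : subreg C) \in [set i : subreg C | val i \in S] by rewrite inE.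
  by rewrite S1_0 inE.
apply: contraNneq SC => S1_T; apply/eqP/esym/setP/subset_cardP; first by rewrite cardS.
apply/fintype.subsetP => i iC.
have : (exist _ i iC : subreg C) \in [set i : subreg C | val i \in S] by rewrite S1_T inE.
by rewrite inE.
Qed.

Section BellRound.
Variables (R : realType) (n : nat).
Local Notation C := R[i].
Local Notation reg := (register n 2 0).

Definition bell_circuit : circuit R reg := [:: bell_layer R n].

Lemma bell_circuit_ok : circuit_ok bell_circuit.
Proof. by constructor; [exact: bell_gates_layer_ok (enum_uniq _) | constructor]. Qed.

Lemma bell_outcome_probE (psi : qstate R 'I_n) x :
  outcome_prob bell_circuit psi x =
  sqmod (apply_layer (bell_layer R n) (@input_state R n 2 0 psi) x).
Proof. by []. Qed.

Lemma bell_outcome_prob_sum1 (psi : qstate R 'I_n) :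
  \sum_x `|psi x| ^+ 2 = 1 -> \sum_x outcome_prob bell_circuit psi x = 1.
Proof.
move=> psi1; apply: (@complexI R).
under eq_bigr do rewrite bell_outcome_probE.
by rewrite sum_sqmodE bell_layer_sum_sqr_norm input_state_sum_sqr_norm.
Qed.

Lemma bell_outcome_prob_odd0 (X : {set 'I_n}) (a : qstate R (subreg X))
    (b : qstate R (subreg (~: X))) x :
  parity_sign R X x != 1 -> outcome_prob bell_circuit (prod_state a b) x = 0.
Proof.
move=> odd_x; rewrite bell_outcome_probE (odd_parity_out0 _ odd_x) ?sqmod0 // => y.
by rewrite -(two_copies_bits y) swap_copies_two_copies !input_state_two_copies prod_state_splice.
Qed.

Lemma bell_prob_even_parity (psi : qstate R 'I_n) (S : {set 'I_n}) :
  \sum_x `|psi x| ^+ 2 = 1 ->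
  (\sum_(x | parity_sign R S x == 1) outcome_prob bell_circuit psi x)%:C%C =
  (2 + swap_overlap S psi + conjc (swap_overlap S psi)) / 4.
Proof.
move=> psi1; under eq_bigr do rewrite bell_outcome_probE.
by rewrite sum_sqmodE prob_even_parity ?input_state_swap_overlap ?input_state_sum_sqr_norm.
Qed.

Lemma bell_prob_even_wrong_cut (eps : R) (psi : qstate R 'I_n) (X S : {set 'I_n}) :
  ~~ odd n -> 0 < eps -> eps <= 1 -> hidden_cut_instance eps psi X ->
  #|S| = n./2 -> S != X -> S != ~: X ->
  \sum_(x | parity_sign R S x == 1) outcome_prob bell_circuit psi x <= 1 - eps ^+ 2 / 2.
Proof.
move=> n_even eps_gt0 eps_le1 [cardX [phi1 [phi2 [phi1_1 phi2_1 far1 _ psiE]]]] cardS SX ScX.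
have -> : psi = prod_state phi1 phi2 by apply: boolp.funext.
have [S1_0 S1_T] := balanced_cut_splits n_even cardX cardS SX ScX.
have psi1 : \sum_x `|prod_state phi1 phi2 x| ^+ 2 = 1.
  by rewrite sum_sqr_norm_prod_state !normalizedE // mulr1.
rewrite -lecR bell_prob_even_parity // swap_overlap_prod_state.
set Q1 := swap_overlap _ phi1; set Q2 := swap_overlap _ phi2.
have Q1_le : Q1 <= (1 - eps ^+ 2)%:C%C.
  by apply: swap_overlap_far_le => //; rewrite expr_le1 // ltW.
have Q2_le : Q2 + conjc Q2 <= 2 by apply/swap_overlap_addC_le2/normalizedE.
rewrite rmorphM /= conjc_swap_overlap -/Q1 ler_pdivrMr ?ltr0n // -addrA -mulrDr.
apply: le_trans (_ : 2 + (1 - eps ^+ 2)%:C%C * 2 <= _).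
  by rewrite lerD2l (le_trans (ler_wpM2l (swap_overlap_ge0 _ _) Q2_le)) // ler_wpM2r.
rewrite le_eqVlt; apply/orP; left; apply/eqP.
rewrite !(rmorphB, rmorph1, fmorph_div, rmorph_nat) /=.
by field.
Qed.

End BellRound.

Section ConsistentCut.
Variables (R : realType) (n : nat) (I : finType) (r : nat).
Variable even : {set 'I_n} -> I -> bool.

Definition consistent (S : {set 'I_n}) (s : {ffun 'I_r -> I}) := [forall j, even S (s j)].

(* junk value set0 when no balanced set is consistent with all outcomes *)
Definition consistent_cut (s : {ffun 'I_r -> I}) : {set 'I_n} :=
  if [pick A : {set 'I_n} | (#|A| == n./2) && consistent A s] is Some A then A
  else finset.set0.

Variables (p : I -> R) (X : {set 'I_n}) (d : R).
Hypothesis p_ge0 : forall x, 0 <= p x.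
Hypothesis p_sum1 : \sum_x p x = 1.
Hypothesis p_odd0 : forall x, ~~ even X x -> p x = 0.
Hypothesis cardX : #|X| = n./2.
Hypothesis d_le1 : d <= 1.
Hypothesis p_even_le : forall S : {set 'I_n}, #|S| = n./2 -> S != X -> S != ~: X ->
  \sum_(x | even S x) p x <= 1 - d.

Definition seq_prob (s : {ffun 'I_r -> I}) := \prod_j p (s j).

Definition wrong_cut (S : {set 'I_n}) := [&& #|S| == n./2, S != X & S != ~: X].

Lemma seq_prob_ge0 s : 0 <= seq_prob s.
Proof. exact: prodr_ge0. Qed.

Lemma sum_seq_prob_consistent (S : {set 'I_n}) :
  \sum_(s | consistent S s) seq_prob s = (\sum_(x | even S x) p x) ^+ r.
Proof.
rewrite -[in RHS](card_ord r) -prodr_const (bigA_distr_big (even S) (fun _ x => p x)).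
by apply: eq_bigl => s; apply/forallP/ffun_onP.
Qed.

Lemma sum_seq_prob : \sum_s seq_prob s = 1.
Proof. by rewrite /seq_prob -(bigA_distr_bigA (fun _ x => p x)) /= big1. Qed.

Lemma sum_seq_prob_inconsistent : \sum_(s | ~~ consistent X s) seq_prob s = 0.
Proof. by apply: big1 => s /forallPn [j odd_j]; rewrite /seq_prob (bigD1 j) //= p_odd0 ?mul0r. Qed.

Definition identifiable s := consistent X s && [forall S, wrong_cut S ==> ~~ consistent S s].

Lemma consistent_cut_correct s : identifiable s ->
  (consistent_cut s == X) || (consistent_cut s == ~: X).
Proof.
move=> /andP[consX /forallP no_wrong]; rewrite /consistent_cut.
case: pickP => [A /andP[cardA consA]|none]; last by have := none X; rewrite cardX eqxx consX.
have := no_wrong A; rewrite /wrong_cut cardA consA implybF.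
by case: eqP; case: eqP.
Qed.

Lemma fail_prob_le : \sum_(s | ~~ identifiable s) seq_prob s <= (2 ^ n)%:R * (1 - d) ^+ r.
Proof.
apply: (@le_trans _ _ (\sum_s ((if ~~ consistent X s then seq_prob s else 0) +
          \sum_(S | wrong_cut S) (if consistent S s then seq_prob s else 0)))).
  rewrite big_mkcond /=; apply: ler_sum => s _.
  have P_ge0 := seq_prob_ge0 s.
  have sum_ge0 : 0 <= \sum_(S | wrong_cut S) (if consistent S s then seq_prob s else 0).
    by apply: sumr_ge0 => S _; case: ifP.
  case: ifP => [|_]; last by rewrite addr_ge0 //; case: ifP.
  case: (boolP (consistent X s)) => [consX /=|_]; last by rewrite lerDl.
  rewrite add0r /identifiable consX => /forallPn [A]; rewrite negb_imply negbK => /andP[wA cA].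
  by rewrite (bigD1 A) //= cA lerDl sumr_ge0 // => S _; case: ifP.
rewrite big_split /= -big_mkcond sum_seq_prob_inconsistent add0r exchange_big /=.
apply: (@le_trans _ _ (\sum_(S : {set 'I_n}) (1 - d) ^+ r)).
  rewrite [X in _ <= X](bigID wrong_cut) /= -[X in X <= _]addr0; apply: lerD.
    apply: ler_sum => S /and3P[/eqP cardS SX ScX].
    rewrite -big_mkcond sum_seq_prob_consistent.
    by apply: lerXn2r; rewrite ?nnegrE ?sumr_ge0 ?p_even_le // subr_ge0.
  by apply: sumr_ge0 => S _; rewrite exprn_ge0 // subr_ge0.
rewrite (eq_bigl (fun S => S \in [set: {set 'I_n}])); last by move=> S; rewrite inE.
by rewrite sumr_const -powersetT card_powerset cardsT card_ord mulr_natl.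
Qed.

Lemma consistent_cut_success :
  1 - (2 ^ n)%:R * (1 - d) ^+ r <=
  \sum_(s | (consistent_cut s == X) || (consistent_cut s == ~: X)) seq_prob s.
Proof.
apply: (@le_trans _ _ (\sum_(s | identifiable s) seq_prob s)).
  have := sum_seq_prob; rewrite (bigID identifiable) /=.
  by have := fail_prob_le; lra.
rewrite [X in _ <= X]big_mkcond [X in X <= _]big_mkcond /=; apply: ler_sum => s _.
case: ifP => [/consistent_cut_correct -> //|_].
by case: ifP => _ //; exact: seq_prob_ge0.
Qed.

End ConsistentCut.

Section Estimates.
Variable R : realType.

Lemma bernoulli_le (d : R) N : 0 <= d -> 1 + N%:R * d <= (1 + d) ^+ N.
Proof.
move=> d_ge0; elim: N => [|N IHN]; first by rewrite mul0r addr0 expr0.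
have : 0 <= N%:R * d by rewrite mulr_ge0.
by rewrite exprS -natr1; nra.
Qed.

(* (1 - d)^N (1 + d)^N <= 1 and (1 + d)^N >= 1 + N d >= 2 *)
Lemma expr_sub_le_half (d : R) N : 0 <= d <= 1 -> 1 <= N%:R * d -> (1 - d) ^+ N <= 2^-1.
Proof.
move=> /andP[d_ge0 d_le1] Nd_ge1.
have : ((1 - d) * (1 + d)) ^+ N <= 1 by apply: exprn_ile1; nra.
have := bernoulli_le N d_ge0; have : 0 <= (1 - d) ^+ N by rewrite exprn_ge0 // subr_ge0.
rewrite exprMn; set x := (1 - d) ^+ N; set y := (1 + d) ^+ N; nra.
Qed.

Lemma union_bound_le (d : R) (n N : nat) : 0 <= d <= 1 -> 1 <= N%:R * d ->
  (2 ^ n)%:R * (1 - d) ^+ (N * (n + 2)) <= 4^-1.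
Proof.
move=> d01 Nd_ge1; have [d_ge0 d_le1] := andP d01.
apply: (@le_trans _ _ ((2 ^ n)%:R * 2^-1 ^+ (n + 2))).
  rewrite ler_wpM2l // exprM lerXn2r ?nnegrE ?exprn_ge0 ?subr_ge0 //.
  exact: expr_sub_le_half.
rewrite natrX exprD mulrA -exprMn mulfV ?pnatr_eq0 // expr1n mul1r.
by rewrite le_eqVlt; apply/orP; left; apply/eqP; field.
Qed.

Lemma ln2_ge_half : 2^-1 <= ln (2 : R).
Proof.
have := @le_ln1Dx R (- 2^-1) ltac:(lra).
by rewrite (_ : 1 + - 2^-1 = 2^-1 :> R) ?lnV ?posrE //; [lra | field].
Qed.

End Estimates.

Lemma bell_success (R : realType) (n N : nat) (eps : R) (psi : qstate R 'I_n) (X : {set 'I_n}) :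
  ~~ odd n -> 0 < eps -> eps <= 1 -> 2 / eps ^+ 2 <= N%:R -> hidden_cut_instance eps psi X ->
  2 / 3 <= success_prob (bell_circuit R n)
             (@consistent_cut n _ (N * (n + 2)) (fun S y => parity_sign R S y == 1)) psi X.
Proof.
move=> n_even eps_gt0 eps_le1 N_ge inst.
have [cardX [phi1 [phi2 [phi1_1 phi2_1 _ _ psiE]]]] := inst.
have psi_prod : psi = prod_state phi1 phi2 by apply: boolp.funext.
have psi1 : \sum_x `|psi x| ^+ 2 = 1.
  by rewrite psi_prod sum_sqr_norm_prod_state !normalizedE // mulr1.
have odd0 x : parity_sign R X x != 1 -> outcome_prob (bell_circuit R n) psi x = 0.
  by rewrite psi_prod; exact: bell_outcome_prob_odd0.
have eps2_gt0 : 0 < eps ^+ 2 by rewrite exprn_gt0.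
have eps2_le1 : eps ^+ 2 <= 1 by rewrite expr_le1 // ltW.
have d01 : 0 <= eps ^+ 2 / 2 <= 1 by apply/andP; split; lra.
have Nd_ge1 : 1 <= N%:R * (eps ^+ 2 / 2).
  by move: N_ge; rewrite ler_pdivrMr // => ?; lra.
have := consistent_cut_success (N * (n + 2)) (even := fun S y => parity_sign R S y == 1)
  (p := outcome_prob (bell_circuit R n) psi) (d := eps ^+ 2 / 2) (fun x => sqmod_ge0 _) (bell_outcome_prob_sum1 psi1) odd0 cardX ltac:(lra)
  (fun S => bell_prob_even_wrong_cut n_even eps_gt0 eps_le1 inst).
have := union_bound_le n d01 Nd_ge1.
rewrite /success_prob /seq_prob; lra.
Qed.

Lemma bell_resource_bounds (R : realType) (n N : nat) (eps : R) :
  (2 <= n)%N -> 0 < eps -> eps <= 1 -> N%:R <= 2 / eps ^+ 2 + 1 ->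
  [/\ (N * (n + 2) * 2)%:R <= 20 * (n%:R ^+ 2 / eps ^+ 2),
      2%:R <= 20 * (n%:R / eps ^+ 2),
      1%:R <= 20 * ln (n%:R / eps ^+ 2) &
      0%:R <= 20 * (n%:R ^+ 2 / eps ^+ 2)].
Proof.
move=> n_ge2 eps_gt0 eps_le1 N_le.
have n_ge2R : 2 <= n%:R :> R by rewrite ler_nat.
have e_gt0 : 0 < eps ^+ 2 by rewrite exprn_gt0.
set ie := (eps ^+ 2)^-1.
have ie_ge1 : 1 <= ie by rewrite /ie invf_ge1 // expr_le1 // ltW.
rewrite -/ie in N_le *.
split.
- have : 0 <= ie * n%:R ^+ 2 by nra.
  have : n%:R + 2 <= n%:R ^+ 2 :> R by nra.
  rewrite !natrM natrD expr2; nra.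
- nra.
- have : ln 2 <= ln (n%:R * ie) by rewrite ler_ln ?posrE; nra.
  have := ln2_ge_half R; lra.
- nra.
Qed.

Theorem theorem4p3 (R : realType) :
  exists c : R, 0 < c /\
  forall (n : nat) (eps : R), ~~ odd n -> (0 < n)%N -> 0 < eps -> eps <= 1 ->
  exists (k a r : nat) (circ : circuit R (register n k a))
         (post : {ffun 'I_r -> bits (register n k a)} -> {set 'I_n}),
    circuit_ok circ /\
    [/\         (* total number of copies used: O(n^2/eps^2) *)
        (r * k)%:R <= c * (n%:R ^+ 2 / eps ^+ 2),
        (* copies accessed coherently at a time: O(n/eps^2) *)
        k%:R <= c * (n%:R / eps ^+ 2),
        (* circuit depth: O(log(n/eps^2)) *)
        (depth circ)%:R <= c * ln (n%:R / eps ^+ 2),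
        (* ancillary qubits: O(n^2/eps^2) *)
        a%:R <= c * (n%:R ^+ 2 / eps ^+ 2) &
        (* success with high probability on every valid instance *)
        forall (psi : qstate R 'I_n) (C : {set 'I_n}),
          hidden_cut_instance eps psi C ->
          2 / 3 <= success_prob circ post psi C].
Proof.
exists 20; split => // n eps n_even n_gt0 eps_gt0 eps_le1.
have n_ge2 : (2 <= n)%N by case: n n_even n_gt0 => [|[|n]].
pose N := (Num.trunc (2 / eps ^+ 2)).+1.
have N_ge : 2 / eps ^+ 2 <= N%:R.
  by apply/ltW; have := truncn_le_nat (2 / eps ^+ 2) (Num.trunc (2 / eps ^+ 2)); rewrite leqnn.
have N_le : N%:R <= 2 / eps ^+ 2 + 1.
  by rewrite /N -natr1 lerD2r truncn_le divr_ge0 // exprn_ge0 // ltW.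
have [copies coherent depth ancillas] := bell_resource_bounds n_ge2 eps_gt0 eps_le1 N_le.
exists 2%N, 0%N, (N * (n + 2))%N, (bell_circuit R n),
  (consistent_cut (fun S y => parity_sign R S y == 1)).
split; first exact: bell_circuit_ok.
by split => // psi C; exact: bell_success.
Qed.
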